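(* Let $(X,\le)$ be a bicontinuous poset and let $C\subseteq X$ be a countable subset that is dense in the interval topology. Then: (i) the collection $\{(a,b): a,b\in C,\ a\ll b\}$ is a countable basis for the interval topology; thus separability of the interval topology implies second countability, and even complete metrizability if $X$ is globally hyperbolic; (ii) for every $x\in X$, the set $\Downarrow x\cap C$ contains a directed set with supremum $x$, and $\Uparrow x\cap C$ contains a filtered set with infimum $x$.
   Context: For a poset $(P,\sqsubseteq)$: a nonempty $S\subseteq P$ is directed if any two elements of $S$ have an upper bound in $S$, and filtered if any two elements of $S$ have a lower bound in $S$; $\bigsqcup S$ and $\bigwedge S$ denote supremum and infimum when they exist. For $x,y\in P$, $x\ll y$ iff for every directed $S\subseteq P$ that has a supremum, $y\sqsubseteq\bigsqcup S$ implies $x\sqsubseteq s$ for some $s\in S$. Put $\Downarrow x=\{a: a\ll x\}$, $\Uparrow x=\{a: x\ll a\}$. A basis of $P$ is a subset $B$ such that for every $x$, $B\cap\Downarrow x$ contains a directed set with supremum $x$; $P$ is continuous if it has a basis. A continuous poset $P$ is bicontinuous if (1) for all $x,y$: $x\ll y$ iff for every filtered $S\subseteq P$ having an infimum, $\bigwedge S\sqsubseteq x$ implies $s\sqsubseteq y$ for some $s\in S$; and (2) for every $x$, $\Uparrow x$ is filtered with infimum $x$. On a bicontinuous poset the sets $(a,b)=\{x: a\ll x\ll b\}$ form a basis for a topology, the interval topology. A globally hyperbolic poset is a bicontinuous poset $(X,\le)$ in which every closed interval $[a,b]=\{x: a\le x\le b\}$ is compact in the interval topology. *)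

From Stdlib Require Import Reals List.
Open Scope R_scope.

Definition countable {T : Type} (A : T -> Prop) : Prop :=
  exists f : T -> nat, forall x y, A x -> A y -> f x = f y -> x = y.

Section MetricDefs.
Context {X : Type} (d : X -> X -> R).
Definition is_metric : Prop :=
  (forall x y, 0 <= d x y) /\ (forall x y, d x y = 0 <-> x = y) /\
  (forall x y, d x y = d y x) /\ (forall x y z, d x z <= d x y + d y z).
Definition metric_open (U : X -> Prop) : Prop :=
  forall x, U x -> exists eps, 0 < eps /\ forall y, d x y < eps -> U y.
Definition metric_cauchy (u : nat -> X) : Prop :=
  forall eps, 0 < eps -> exists N, forall m n, (N <= m)%nat -> (N <= n)%nat ->
    d (u m) (u n) < eps.
Definition metric_complete : Prop :=
  forall u : nat -> X, metric_cauchy u ->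
    exists l, forall eps, 0 < eps -> exists N, forall n, (N <= n)%nat -> d (u n) l < eps.
End MetricDefs.

Section PosetDefs.
Context {X : Type} (le : X -> X -> Prop).

Definition is_poset : Prop :=
  (forall x, le x x) /\
  (forall x y, le x y -> le y x -> x = y) /\
  (forall x y z, le x y -> le y z -> le x z).

Definition subset (A B : X -> Prop) : Prop := forall x, A x -> B x.

Definition directed (S : X -> Prop) : Prop :=
  (exists s, S s) /\
  (forall x y, S x -> S y -> exists z, S z /\ le x z /\ le y z).

Definition filtered (S : X -> Prop) : Prop :=
  (exists s, S s) /\
  (forall x y, S x -> S y -> exists z, S z /\ le z x /\ le z y).

Definition is_sup (S : X -> Prop) (s : X) : Prop :=
  (forall x, S x -> le x s) /\ (forall u, (forall x, S x -> le x u) -> le s u).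

Definition is_inf (S : X -> Prop) (i : X) : Prop :=
  (forall x, S x -> le i x) /\ (forall l, (forall x, S x -> le l x) -> le l i).

Definition way_below (x y : X) : Prop :=
  forall S s, directed S -> is_sup S s -> le y s -> exists z, S z /\ le x z.

Definition ddown (x : X) : X -> Prop := fun a => way_below a x.
Definition uup (x : X) : X -> Prop := fun a => way_below x a.

Definition is_basis (B : X -> Prop) : Prop :=
  forall x, exists S, subset S (fun a => B a /\ ddown x a) /\
                      directed S /\ is_sup S x.

Definition continuous_poset : Prop := exists B, is_basis B.

Definition bicontinuous : Prop :=
  continuous_poset /\
  (forall x y, way_below x y <->
     (forall S i, filtered S -> is_inf S i -> le i x -> exists s, S s /\ le s y)) /\
  (forall x, filtered (uup x) /\ is_inf (uup x) x).

Definition interval_oo (a b : X) : X -> Prop :=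
  fun x => way_below a x /\ way_below x b.

Definition interval_cc (a b : X) : X -> Prop :=
  fun x => le a x /\ le x b.

Definition interval_open (U : X -> Prop) : Prop :=
  forall x, U x -> exists a b, interval_oo a b x /\ subset (interval_oo a b) U.

Definition interval_dense (D : X -> Prop) : Prop :=
  forall U, interval_open U -> (exists x, U x) -> exists x, U x /\ D x.

Definition interval_compact (K : X -> Prop) : Prop :=
  forall F : (X -> Prop) -> Prop,
    (forall U, F U -> interval_open U) ->
    (forall x, K x -> exists U, F U /\ U x) ->
    exists l : list (X -> Prop),
      (forall U, In U l -> F U) /\ (forall x, K x -> exists U, In U l /\ U x).

Definition globally_hyperbolic : Prop :=
  bicontinuous /\ (forall a b, interval_compact (interval_cc a b)).

Definition is_topological_basis (B : (X -> Prop) -> Prop) : Prop :=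
  (forall U, B U -> interval_open U) /\
  (forall U, interval_open U ->
     forall x, U x -> exists V, B V /\ V x /\ subset V U).

Definition second_countable : Prop :=
  exists B : (X -> Prop) -> Prop,
    countable B /\ is_topological_basis B.

Definition interval_completely_metrizable : Prop :=
  exists d : X -> X -> R,
    is_metric d /\
    (forall U, interval_open U <-> metric_open d U) /\
    metric_complete d.
End PosetDefs.

From Stdlib Require Import Reals List Lra Lia Classical ClassicalEpsilon.
From Stdlib Require Import FunctionalExtensionality ZArith.
From Stdlib Require Cantor.
Open Scope R_scope.

(* Interpolation through the dense set [C] ([a << b] implies [a << c << b] for some [c] in
   [C]) shrinks every basic interval around a point to one with endpoints in [C]; this gives
   the countable basis and, applied below and above [x], the approximations of part (ii).
   For complete metrizability, every pair [p << q] in [C] yields a Urysohn function for the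
   interval topology, built along a dyadic chain of interpolants, and the weighted sum
   [d0 x y = sum_m 2^-m |f_m x - f_m y|] over these countably many functions is a metric
   inducing the topology.  Adding [|phi x - phi y|] for a continuous [phi] that is large
   outside finitely many closed intervals [[a, b]] makes every Cauchy sequence stay in a
   finite union of such intervals; in the globally hyperbolic case these are compact, so the
   sequence has a cluster point and converges. *)

(** * Suprema and dyadic series *)

(* [0] is a junk value, returned when [E] is empty or unbounded. *)
Definition supR (E : R -> Prop) : R :=
  match excluded_middle_informative (bound E /\ exists x, E x) with
  | left h => proj1_sig (completeness E (proj1 h) (proj2 h))
  | right _ => 0
  end.

Lemma supR_spec E : bound E -> (exists x, E x) -> is_lub E (supR E).
Proof.
  intros hb he. unfold supR.
  destruct excluded_middle_informative as [h|h]; [apply proj2_sig | tauto].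
Qed.

Lemma supR_ub E B r : (forall x, E x -> x <= B) -> E r -> r <= supR E.
Proof. intros hB hr. apply (supR_spec E); eauto. exists B; exact hB. Qed.

Lemma supR_le E B r : (forall x, E x -> x <= B) -> E r -> supR E <= B.
Proof. intros hB hr. apply (supR_spec E); eauto. exists B; exact hB. Qed.

Lemma pow2_pos n : 0 < 2 ^ n.
Proof. apply pow_lt; lra. Qed.

Lemma div_pow2_pos c n : 0 < c -> 0 < c / 2 ^ n.
Proof. intros hc. apply Rdiv_lt_0_compat; auto using pow2_pos. Qed.

Lemma dyadic_small eps : 0 < eps -> exists n, / 2 ^ n < eps.
Proof.
  intros he. destruct (pow_lt_1_zero (/ 2)) with (y := eps) as [n hn]; auto.
  { rewrite Rabs_pos_eq; lra. }
  exists n. specialize (hn n (le_n n)).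
  rewrite pow_inv, Rabs_pos_eq in hn; auto. left; apply Rinv_0_lt_compat, pow2_pos.
Qed.

Lemma dyadic_floor t n : 0 <= t -> exists k, INR k / 2 ^ n <= t < INR (S k) / 2 ^ n.
Proof.
  intros ht. pose proof (pow2_pos n) as hp.
  destruct (archimed (t * 2 ^ n)) as [hup _].
  assert (hz : (0 <= up (t * 2 ^ n))%Z).
  { apply le_IZR. assert (0 <= t * 2 ^ n) by (apply Rmult_le_pos; lra). lra. }
  assert (hK : t < INR (Z.to_nat (up (t * 2 ^ n))) / 2 ^ n).
  { rewrite INR_IZR_INZ, Z2Nat.id by auto.
    apply (Rmult_lt_reg_r (2 ^ n)); auto. field_simplify; lra. }
  revert hK. generalize (Z.to_nat (up (t * 2 ^ n))) as K.
  induction K as [|K IH]; intros hK.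
  - simpl in hK. lra.
  - destruct (Rlt_dec t (INR K / 2 ^ n)) as [h|h]; auto. exists K; lra.
Qed.

Lemma dyadic_lt n1 k1 n2 k2 : INR k1 / 2 ^ n1 < INR k2 / 2 ^ n2 ->
  (k1 * 2 ^ n2 < k2 * 2 ^ n1)%nat.
Proof.
  intros h. apply INR_lt. rewrite !mult_INR, !pow_INR. change (INR 2) with 2.
  pose proof (pow2_pos n1). pose proof (pow2_pos n2).
  replace (INR k1 * 2 ^ n2) with (INR k1 / 2 ^ n1 * (2 ^ n1 * 2 ^ n2)) by (field; lra).
  replace (INR k2 * 2 ^ n1) with (INR k2 / 2 ^ n2 * (2 ^ n1 * 2 ^ n2)) by (field; lra).
  apply Rmult_lt_compat_r; auto. apply Rmult_lt_0_compat; auto.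
Qed.

Lemma dyadic_le1 n k : (k <= 2 ^ n)%nat -> INR k / 2 ^ n <= 1.
Proof.
  intros h. pose proof (pow2_pos n). apply le_INR in h. rewrite pow_INR in h. change (INR 2) with 2 in h.
  apply (Rmult_le_reg_r (2 ^ n)); auto. field_simplify; lra.
Qed.

Lemma dyadic_ge0 n k : 0 <= INR k / 2 ^ n.
Proof. pose proof (pos_INR k). pose proof (pow2_pos n). apply Rmult_le_pos; [lra|]. left; apply Rinv_0_lt_compat; auto. Qed.

Fixpoint psum (t : nat -> R) (N : nat) : R :=
  match N with O => 0 | S N => psum t N + t N end.

Definition ssum (t : nat -> R) : R := supR (fun r => exists N, r = psum t N).

Lemma psum_mono t N N' : (forall m, 0 <= t m) -> (N <= N')%nat -> psum t N <= psum t N'.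
Proof.
  intros ht hN. induction hN as [|N' _ IH]; simpl; [lra|]. specialize (ht N'). lra.
Qed.

Lemma psum_le_add t t1 t2 N : (forall m, t m <= t1 m + t2 m) ->
  psum t N <= psum t1 N + psum t2 N.
Proof. intros h. induction N as [|N IH]; simpl; [lra|]. specialize (h N). lra. Qed.

Lemma psum_stationary t j N : (forall m, (j <= m)%nat -> t m = 0) -> (j <= N)%nat ->
  psum t N = psum t j.
Proof. intros h hN. induction hN as [|N hjN IH]; simpl; auto. rewrite h; auto. lra. Qed.

Lemma ssum_finite t j : (forall m, 0 <= t m) -> (forall m, (j <= m)%nat -> t m = 0) ->
  ssum t = psum t j.
Proof.
  intros hpos hz.
  assert (hb : forall r, (exists N, r = psum t N) -> r <= psum t j).
  { intros r [N ->]. destruct (Nat.le_ge_cases N j).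
    - apply psum_mono; auto.
    - rewrite (psum_stationary t j N); auto; lra. }
  apply Rle_antisym; [apply (supR_le _ _ (psum t j)) | apply (supR_ub _ (psum t j))]; eauto.
Qed.

Section DyadicSeries.
Variable t : nat -> R.
Hypothesis t_bound : forall m, 0 <= t m <= 2 / 2 ^ m.

Lemma psum_tail N k : psum t (N + k) <= psum t N + 4 / 2 ^ N - 4 / 2 ^ (N + k).
Proof.
  induction k as [|k IH]; [rewrite Nat.add_0_r; lra|].
  rewrite Nat.add_succ_r. simpl psum. pose proof (t_bound (N + k)).
  pose proof (pow2_pos (N + k)).
  replace (4 / 2 ^ S (N + k)) with (2 / 2 ^ (N + k)) by (simpl; field; lra).
  replace (4 / 2 ^ (N + k)) with (2 * (2 / 2 ^ (N + k))) in IH by (field; lra).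
  lra.
Qed.

Lemma psum_le_4 N : psum t N <= 4.
Proof.
  pose proof (psum_tail 0 N) as h. simpl in h.
  pose proof (div_pow2_pos 4 N ltac:(lra)).
  lra.
Qed.

Lemma psum_le_ssum N : psum t N <= ssum t.
Proof. apply (supR_ub _ 4); eauto. intros r [N' ->]. apply psum_le_4. Qed.

Lemma ssum_le_psum N : ssum t <= psum t N + 4 / 2 ^ N.
Proof.
  assert (ht : forall m, 0 <= t m) by (intros m; apply t_bound).
  apply (supR_le _ _ (psum t 0)); eauto. intros r [N' ->].
  pose proof (div_pow2_pos 4 N ltac:(lra)).
  destruct (Nat.le_ge_cases N' N) as [h|h].
  - pose proof (psum_mono t N' N ht h). lra.
  - replace N' with (N + (N' - N))%nat by lia. pose proof (psum_tail N (N' - N)).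
    pose proof (div_pow2_pos 4 (N + (N' - N)) ltac:(lra)).
    lra.
Qed.

Lemma ssum_ge0 : 0 <= ssum t.
Proof. apply (psum_le_ssum 0). Qed.

Lemma term_le_ssum m : t m <= ssum t.
Proof.
  pose proof (psum_le_ssum (S m)) as h. simpl in h.
  pose proof (psum_mono t 0 m (fun m => proj1 (t_bound m)) (Nat.le_0_l m)). simpl in *. lra.
Qed.

End DyadicSeries.

Lemma ssum_le_add t t1 t2 :
  (forall m, 0 <= t1 m <= 2 / 2 ^ m) -> (forall m, 0 <= t2 m <= 2 / 2 ^ m) ->
  (forall m, t m <= t1 m + t2 m) -> ssum t <= ssum t1 + ssum t2.
Proof.
  intros h1 h2 h. apply (supR_le _ _ (psum t 0)); eauto. intros r [N ->].
  pose proof (psum_le_add t t1 t2 N h).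
  pose proof (psum_le_ssum t1 h1 N). pose proof (psum_le_ssum t2 h2 N). lra.
Qed.

(** * Urysohn functions for an interpolating relation *)

(* The properties of [way_below] that the Urysohn construction needs; abstracting them
   lets it run on the reversed order as well (see [bicontinuous_aux_dual]). *)
Set Implicit Arguments.
Record interpolating_aux {X : Type} (le wb : X -> X -> Prop) : Prop := {
  aux_le_trans : forall x y z, le x y -> le y z -> le x z;
  aux_wb_le : forall a b, wb a b -> le a b;
  aux_le_wb_trans : forall a b c, le a b -> wb b c -> wb a c;
  aux_wb_le_trans : forall a b c, wb a b -> le b c -> wb a c;
  aux_interpolate : forall a b, wb a b -> exists c, wb a c /\ wb c b;
  aux_approx_below : forall x q, ~ le x q -> exists a, wb a x /\ ~ le a q;
  aux_below_directed : forall a1 a2 x, wb a1 x -> wb a2 x ->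
    exists a, wb a x /\ le a1 a /\ le a2 a;
  aux_above_filtered : forall c1 c2 x, wb x c1 -> wb x c2 ->
    exists c, wb x c /\ le c c1 /\ le c c2;
  aux_below_inhabited : forall x, exists a, wb a x;
  aux_above_inhabited : forall x, exists c, wb x c }.
Unset Implicit Arguments.

Section Interpolating.
Context {X : Type} (le wb : X -> X -> Prop).
Hypothesis Haux : interpolating_aux le wb.

Definition near (P : X -> Prop) (x : X) : Prop :=
  exists a c, wb a x /\ wb x c /\ forall z, wb a z -> wb z c -> P z.

Definition cont (f : X -> R) (x : X) : Prop :=
  forall eps, 0 < eps -> near (fun z => Rabs (f z - f x) < eps) x.

Lemma near_mono (P P' : X -> Prop) x : (forall z, P z -> P' z) -> near P x -> near P' x.
Proof. intros h [a [c [ha [hc hP]]]]. exists a, c; auto. Qed.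

Lemma near_at P x : near P x -> P x.
Proof. intros [a [c [ha [hc hP]]]]. auto. Qed.

Lemma near_and P P' x : near P x -> near P' x -> near (fun z => P z /\ P' z) x.
Proof.
  intros [a1 [c1 [ha1 [hc1 h1]]]] [a2 [c2 [ha2 [hc2 h2]]]].
  destruct (aux_below_directed Haux a1 a2 x ha1 ha2) as [a [ha [k1 k2]]].
  destruct (aux_above_filtered Haux c1 c2 x hc1 hc2) as [c [hc [l1 l2]]].
  exists a, c. split; [exact ha | split; [exact hc |]].
  intros z hz hz'. split.
  - apply h1; [apply (aux_le_wb_trans Haux a1 a) | apply (aux_wb_le_trans Haux z c)]; auto.
  - apply h2; [apply (aux_le_wb_trans Haux a2 a) | apply (aux_wb_le_trans Haux z c)]; auto.
Qed.

Lemma near_all (P : X -> Prop) x : (forall z, P z) -> near P x.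
Proof.
  intros h. destruct (aux_below_inhabited Haux x) as [a ha].
  destruct (aux_above_inhabited Haux x) as [c hc]. exists a, c; auto.
Qed.

Lemma cont_const c x : cont (fun _ => c) x.
Proof. intros e he. apply near_all. intros z. rewrite Rminus_diag, Rabs_R0; auto. Qed.

Lemma cont_local f g x : near (fun z => f z = g z) x -> cont f x -> cont g x.
Proof.
  intros hfg hf e he. pose proof (near_at _ _ hfg) as hx.
  eapply near_mono; [|apply near_and; [apply hfg | apply (hf e he)]].
  intros z [hz1 hz2]. rewrite <- hz1, <- hx; auto.
Qed.

Lemma cont_plus f g x : cont f x -> cont g x -> cont (fun z => f z + g z) x.
Proof.
  intros hf hg e he.
  eapply near_mono; [|apply near_and; [apply (hf (e / 2)) | apply (hg (e / 2))]]; try lra.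
  intros z [h1 h2]. pose proof (Rabs_triang (f z - f x) (g z - g x)).
  replace (f z + g z - (f x + g x)) with (f z - f x + (g z - g x)) by ring. lra.
Qed.

Lemma cont_scal c f x : cont f x -> cont (fun z => c * f z) x.
Proof.
  intros hf e he. assert (hc : 0 < Rabs c + 1) by (pose proof (Rabs_pos c); lra).
  eapply near_mono; [|apply (hf (e / (Rabs c + 1)))]; [|apply Rdiv_lt_0_compat; lra].
  intros z hz. rewrite <- Rmult_minus_distr_l, Rabs_mult.
  apply Rle_lt_trans with ((Rabs c + 1) * Rabs (f z - f x)).
  - apply Rmult_le_compat_r; [apply Rabs_pos | lra].
  - apply (Rmult_lt_compat_l (Rabs c + 1)) in hz; auto.
    replace ((Rabs c + 1) * (e / (Rabs c + 1))) with e in hz by (field; lra). auto.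
Qed.

Lemma cont_dist f y x : cont f x -> cont (fun z => Rabs (f z - f y)) x.
Proof.
  intros hf e he. eapply near_mono; [|apply (hf e he)].
  intros z hz. eapply Rle_lt_trans; [|apply hz].
  replace (f z - f x) with ((f z - f y) - (f x - f y)) by ring. apply Rabs_triang_inv2.
Qed.

Lemma cont_mult01 f g x : (forall z, 0 <= f z <= 1) -> (forall z, 0 <= g z <= 1) ->
  cont f x -> cont g x -> cont (fun z => f z * g z) x.
Proof.
  intros bf bg hf hg e he.
  eapply near_mono; [|apply near_and; [apply (hf (e / 2)) | apply (hg (e / 2))]]; try lra.
  intros z [h1 h2].
  replace (f z * g z - f x * g x) with (f z * (g z - g x) + g x * (f z - f x)) by ring.
  pose proof (Rabs_triang (f z * (g z - g x)) (g x * (f z - f x))) as htri.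
  rewrite !Rabs_mult in htri.
  assert (Rabs (f z) * Rabs (g z - g x) <= Rabs (g z - g x)).
  { rewrite <- (Rmult_1_l (Rabs (g z - g x))) at 2. apply Rmult_le_compat_r; [apply Rabs_pos|].
    rewrite Rabs_pos_eq; apply bf. }
  assert (Rabs (g x) * Rabs (f z - f x) <= Rabs (f z - f x)).
  { rewrite <- (Rmult_1_l (Rabs (f z - f x))) at 2. apply Rmult_le_compat_r; [apply Rabs_pos|].
    rewrite Rabs_pos_eq; apply bg. }
  lra.
Qed.

Lemma cont_max f g x : cont f x -> cont g x -> cont (fun z => Rmax (f z) (g z)) x.
Proof.
  intros hf hg e he.
  eapply near_mono; [|apply near_and; [apply (hf (e / 2)) | apply (hg (e / 2))]]; try lra.
  intros z [h1 h2]. unfold Rmax in *.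
  destruct (Rle_dec (f z) (g z)), (Rle_dec (f x) (g x));
    unfold Rabs in *; repeat destruct Rcase_abs; lra.
Qed.

Lemma cont_psum (h : nat -> X -> R) N x : (forall m, cont (h m) x) ->
  cont (fun z => psum (fun m => h m z) N) x.
Proof.
  intros hh. induction N as [|N IH]; simpl; [apply cont_const | apply cont_plus; auto].
Qed.

Lemma between_ex a b : exists c, (exists c', wb a c' /\ wb c' b) -> wb a c /\ wb c b.
Proof.
  destruct (classic (exists c', wb a c' /\ wb c' b)) as [[c hc]|h]; [exists c | exists a]; tauto.
Qed.

Definition between a b : X := proj1_sig (constructive_indefinite_description _ (between_ex a b)).

Lemma between_spec a b : wb a b -> wb a (between a b) /\ wb (between a b) b.
Proof.
  intros h. unfold between. destruct constructive_indefinite_description as [c hc]; simpl.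
  apply hc, (aux_interpolate Haux); auto.
Qed.

(* For [k <= 2 ^ n], [chain a b n k] sits at the dyadic level [k / 2 ^ n] of a
   [wb]-chain from [a] to [b]; level [n + 1] inserts [between] points into level [n]. *)
Fixpoint chain (a b : X) (n k : nat) : X :=
  match n with
  | O => match k with O => a | _ => b end
  | S n => if Nat.even k then chain a b n (Nat.div2 k)
           else between (chain a b n (Nat.div2 k)) (chain a b n (S (Nat.div2 k)))
  end.

Lemma chain_S a b n k : chain a b (S n) k = if Nat.even k then chain a b n (Nat.div2 k)
  else between (chain a b n (Nat.div2 k)) (chain a b n (S (Nat.div2 k))).
Proof. reflexivity. Qed.

Lemma chain_double a b n k : chain a b (S n) (2 * k) = chain a b n k.
Proof. rewrite chain_S, Nat.even_even, Nat.div2_double. reflexivity. Qed.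

Lemma chain_odd a b n k :
  chain a b (S n) (S (2 * k)) = between (chain a b n k) (chain a b n (S k)).
Proof.
  rewrite chain_S, Nat.div2_succ_double.
  replace (Nat.even (S (2 * k))) with false; [reflexivity|].
  replace (S (2 * k)) with (2 * k + 1)%nat by lia. symmetry; apply Nat.even_odd.
Qed.

Lemma chain_succ a b : wb a b ->
  forall n k, (k < 2 ^ n)%nat -> wb (chain a b n k) (chain a b n (S k)).
Proof.
  intros hab n. induction n as [|n IH]; intros k hk.
  - simpl in hk. replace k with 0%nat by lia. exact hab.
  - simpl in hk. destruct (Nat.Even_or_Odd k) as [[j ->]|[j ->]].
    + rewrite chain_double, chain_odd. apply between_spec, IH. lia.
    + replace (2 * j + 1)%nat with (S (2 * j)) by lia.
      replace (S (S (2 * j))) with (2 * S j)%nat by lia.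
      rewrite chain_double, chain_odd. apply between_spec, IH. lia.
Qed.

Lemma chain_lt a b n k1 k2 : wb a b -> (k1 < k2)%nat -> (k2 <= 2 ^ n)%nat ->
  wb (chain a b n k1) (chain a b n k2).
Proof.
  intros hab h12. induction h12 as [|k2 h12 IH]; intros h2.
  - apply chain_succ; auto.
  - apply (aux_wb_le_trans Haux _ (chain a b n k2)); [apply IH; lia|].
    apply (aux_wb_le Haux), chain_succ; auto.
Qed.

Lemma chain_lift a b n m k : chain a b (n + m) (k * 2 ^ m) = chain a b n k.
Proof.
  induction m as [|m IH]; [rewrite Nat.add_0_r, Nat.mul_1_r; auto|].
  replace (n + S m)%nat with (S (n + m)) by lia.
  replace (k * 2 ^ S m)%nat with (2 * (k * 2 ^ m))%nat by (simpl; lia).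
  rewrite chain_double; auto.
Qed.

Lemma chain_mono a b n1 k1 n2 k2 : wb a b -> (k1 <= 2 ^ n1)%nat -> (k2 <= 2 ^ n2)%nat ->
  INR k1 / 2 ^ n1 < INR k2 / 2 ^ n2 -> wb (chain a b n1 k1) (chain a b n2 k2).
Proof.
  intros hab h1 h2 h. apply dyadic_lt in h.
  rewrite <- (chain_lift a b n1 n2 k1), <- (chain_lift a b n2 n1 k2), (Nat.add_comm n2 n1).
  apply chain_lt; auto. rewrite Nat.pow_add_r. nia.
Qed.

Definition ury (a b x : X) : R := supR (fun r => r = 0 \/
  exists n k, (k <= 2 ^ n)%nat /\ ~ le x (chain a b n k) /\ r = INR k / 2 ^ n).

Lemma ury_levels_le1 a b x r : (r = 0 \/
  exists n k, (k <= 2 ^ n)%nat /\ ~ le x (chain a b n k) /\ r = INR k / 2 ^ n) -> r <= 1.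
Proof. intros [->|[n [k [hk [_ ->]]]]]; [lra | apply dyadic_le1; auto]. Qed.

Lemma ury_01 a b x : 0 <= ury a b x <= 1.
Proof.
  split; [apply (supR_ub _ 1) | apply (supR_le _ _ 0)];
    solve [apply ury_levels_le1 | left; reflexivity].
Qed.

Lemma ury_ge_level a b x n k : (k <= 2 ^ n)%nat -> ~ le x (chain a b n k) ->
  INR k / 2 ^ n <= ury a b x.
Proof. intros hk hx. apply (supR_ub _ 1); [apply ury_levels_le1 | right; eauto]. Qed.

Lemma ury_le_level a b x n k : wb a b -> (k <= 2 ^ n)%nat -> le x (chain a b n k) ->
  ury a b x <= INR k / 2 ^ n.
Proof.
  intros hab hk hx. apply (supR_le _ _ 0); [|left; auto].
  intros r [->|[n' [k' [hk' [hx' ->]]]]]; [apply dyadic_ge0|].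
  apply Rnot_lt_le. intros hlt. apply hx'. apply (aux_le_trans Haux _ (chain a b n k)); auto.
  apply (aux_wb_le Haux), chain_mono; auto.
Qed.

Lemma ury_below a b x : wb a b -> le x a -> ury a b x = 0.
Proof.
  intros hab hx. pose proof (ury_le_level a b x 0 0 hab (Nat.le_0_l _) hx).
  pose proof (ury_01 a b x). simpl in *. lra.
Qed.

Lemma ury_outside a b x : ~ le x b -> ury a b x = 1.
Proof.
  intros hx. pose proof (ury_ge_level a b x 0 1 (le_n 1) hx).
  pose proof (ury_01 a b x). simpl in *. lra.
Qed.

Lemma ury_upper a b x n : wb a b ->
  exists c, wb x c /\ forall z, wb z c -> ury a b z <= ury a b x + 2 / 2 ^ n.
Proof.
  intros hab. pose proof (pow2_pos n).
  destruct (dyadic_floor (ury a b x) n (proj1 (ury_01 a b x))) as [k [hk1 hk2]].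
  assert (hbound : ury a b x + 2 / 2 ^ n >= INR (S (S k)) / 2 ^ n).
  { rewrite !S_INR. replace ((INR k + 1 + 1) / 2 ^ n) with (INR k / 2 ^ n + 2 / 2 ^ n)
      by (field; lra). lra. }
  destruct (le_lt_dec (S (S k)) (2 ^ n)) as [hl|hl].
  - assert (hx : le x (chain a b n (S k))).
    { apply NNPP; intros hx. apply ury_ge_level in hx; [lra | lia]. }
    exists (chain a b n (S (S k))). split.
    + apply (aux_le_wb_trans Haux _ (chain a b n (S k))); auto. apply chain_succ; auto.
    + intros z hz. eapply Rle_trans; [apply ury_le_level; eauto; apply (aux_wb_le Haux); auto | lra].
  - destruct (aux_above_inhabited Haux x) as [c hc]. exists c. split; auto. intros z _.
    assert (1 <= INR (S (S k)) / 2 ^ n).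
    { apply (Rmult_le_reg_r (2 ^ n)); auto. field_simplify; [|lra].
      apply lt_INR in hl. rewrite pow_INR in hl. change (INR 2) with 2 in hl. lra. }
    pose proof (ury_01 a b z). lra.
Qed.

Lemma ury_lower a b x n : wb a b ->
  exists a', wb a' x /\ forall z, wb a' z -> ury a b x - 2 / 2 ^ n <= ury a b z.
Proof.
  intros hab. pose proof (pow2_pos n).
  destruct (dyadic_floor (ury a b x) n (proj1 (ury_01 a b x))) as [[|k] [hk1 hk2]].
  - destruct (aux_below_inhabited Haux x) as [a' ha']. exists a'. split; auto. intros z _.
    pose proof (ury_01 a b z). simpl in hk2.
    assert (1 / 2 ^ n <= 2 / 2 ^ n) by (apply Rmult_le_compat_r; [left; apply Rinv_0_lt_compat|]; lra).
    lra.
  - assert (hk : (S k <= 2 ^ n)%nat).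
    { apply INR_le. rewrite pow_INR. change (INR 2) with 2.
      apply (Rmult_le_reg_r (/ 2 ^ n)); [apply Rinv_0_lt_compat; auto|].
      rewrite Rinv_r; [|lra]. pose proof (ury_01 a b x). unfold Rdiv in hk1. lra. }
    assert (hx : ~ le x (chain a b n k)).
    { intros hx. apply (ury_le_level a b x n k hab) in hx; [|lia].
      rewrite S_INR in hk1. assert (/ 2 ^ n > 0) by (apply Rinv_0_lt_compat; auto).
      unfold Rdiv in *. lra. }
    destruct (aux_approx_below Haux x _ hx) as [a' [ha' hna']]. exists a'. split; auto.
    intros z hz. assert (hzk : INR k / 2 ^ n <= ury a b z).
    { apply ury_ge_level; [lia|]. intros h. apply hna', (aux_le_trans Haux _ z); auto.
      apply (aux_wb_le Haux); auto. }
    rewrite !S_INR in hk2. replace ((INR k + 1 + 1) / 2 ^ n) with (INR k / 2 ^ n + 2 / 2 ^ n)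
      in hk2 by (field; lra). lra.
Qed.

Lemma ury_cont a b x : wb a b -> cont (ury a b) x.
Proof.
  intros hab e he. destruct (dyadic_small (e / 2)) as [n hn]; [lra|].
  replace (2 / 2 ^ n) with (2 * / 2 ^ n) in * by (unfold Rdiv; ring).
  destruct (ury_upper a b x n hab) as [c [hc hup]].
  destruct (ury_lower a b x n hab) as [a' [ha' hlo]].
  exists a', c. split; [auto | split; [auto|]]. intros z hz1 hz2.
  specialize (hup z hz2). specialize (hlo z hz1). unfold Rdiv in *. apply Rabs_def1; lra.
Qed.

End Interpolating.

(** * Bicontinuous posets and dense subsets *)

Section Bicontinuous.
Context {X : Type} (le : X -> X -> Prop).
Hypothesis HP : is_poset le.
Hypothesis HB : bicontinuous le.
Local Notation wb := (way_below le).

Lemma po_refl x : le x x.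
Proof. apply HP. Qed.

Lemma po_trans x y z : le x y -> le y z -> le x z.
Proof. apply HP. Qed.

Lemma wb_le a b : wb a b -> le a b.
Proof.
  intros h. destruct (h (fun s => s = b) b) as [z [-> hz]]; auto using po_refl.
  - split; [exists b; auto|]. intros x y -> ->. exists b; auto using po_refl.
  - split; [intros x ->; apply po_refl | intros u hu; apply hu; auto].
Qed.

Lemma le_wb_trans a b c : le a b -> wb b c -> wb a c.
Proof.
  intros hab hbc S s hS hs hc. destruct (hbc S s hS hs hc) as [z [hz hbz]].
  exists z. split; auto. apply (po_trans _ b); auto.
Qed.

Lemma wb_le_trans a b c : wb a b -> le b c -> wb a c.
Proof. intros hab hbc S s hS hs hc. apply (hab S s hS hs). apply (po_trans _ c); auto. Qed.

Lemma le_of_ddown_le y u : (forall d, wb d y -> le d u) -> le y u.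
Proof.
  intros h. destruct HB as [[B hB] _]. destruct (hB y) as [S [hSB [_ hsup]]].
  apply hsup. intros s hs. apply h, hSB, hs.
Qed.

Lemma le_of_uup_le y u : (forall c, wb y c -> le u c) -> le u y.
Proof. intros h. destruct HB as [_ [_ hB]]. apply (hB y), h. Qed.

Lemma ddown_directed x : directed le (ddown le x).
Proof.
  destruct HB as [[B hB] _]. destruct (hB x) as [S [hSB [[[s hs] hdir] hsup]]].
  split; [exists s; apply hSB, hs|].
  intros a1 a2 h1 h2.
  destruct (h1 S x (conj (ex_intro _ s hs) hdir) hsup (po_refl x)) as [s1 [hs1 k1]].
  destruct (h2 S x (conj (ex_intro _ s hs) hdir) hsup (po_refl x)) as [s2 [hs2 k2]].
  destruct (hdir s1 s2 hs1 hs2) as [s3 [hs3 [l1 l2]]].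
  exists s3. split; [apply hSB, hs3 | split; eapply po_trans; eauto].
Qed.

Lemma uup_filtered x : filtered le (uup le x).
Proof. apply HB. Qed.

(* Interpolation from below: [x] is the supremum of the directed set of all [c << d << x]. *)
Lemma wb_interpolate a x : wb a x -> exists c, wb a c /\ wb c x.
Proof.
  intros h. set (T := fun c => exists d, wb d x /\ wb c d).
  assert (hT : directed le T).
  { destruct (ddown_directed x) as [[d hd] hdir]. destruct (ddown_directed d) as [[c hc] _].
    split; [exists c, d; auto|].
    intros c1 c2 [d1 [hd1 hc1]] [d2 [hd2 hc2]].
    destruct (hdir d1 d2 hd1 hd2) as [d3 [hd3 [k1 k2]]].
    destruct (proj2 (ddown_directed d3) c1 c2 (wb_le_trans _ _ _ hc1 k1)
      (wb_le_trans _ _ _ hc2 k2)) as [c3 [hc3 [l1 l2]]].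
    exists c3. split; auto. exists d3; auto. }
  assert (hs : is_sup le T x).
  { split.
    - intros c [d [hd hc]]. apply (po_trans _ d); apply wb_le; auto.
    - intros u hu. apply le_of_ddown_le. intros d hd. apply le_of_ddown_le.
      intros c hc. apply hu. exists d; auto. }
  destruct (h T x hT hs (po_refl x)) as [c [[d [hd hc]] hac]].
  exists d. split; auto. apply (le_wb_trans _ c); auto.
Qed.

(* Dually, using the filtered-set characterisation of [<<] from bicontinuity. *)
Lemma wb_interpolate_above x b : wb x b -> exists c, wb x c /\ wb c b.
Proof.
  intros h. set (T := fun c => exists d, wb x d /\ wb d c).
  assert (hT : filtered le T).
  { destruct (uup_filtered x) as [[d hd] hfil]. destruct (uup_filtered d) as [[c hc] _].
    split; [exists c, d; auto|].
    intros c1 c2 [d1 [hd1 hc1]] [d2 [hd2 hc2]].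
    destruct (hfil d1 d2 hd1 hd2) as [d3 [hd3 [k1 k2]]].
    destruct (proj2 (uup_filtered d3) c1 c2 (le_wb_trans _ _ _ k1 hc1)
      (le_wb_trans _ _ _ k2 hc2)) as [c3 [hc3 [l1 l2]]].
    exists c3. split; auto. exists d3; auto. }
  assert (hs : is_inf le T x).
  { split.
    - intros c [d [hd hc]]. apply (po_trans _ d); apply wb_le; auto.
    - intros u hu. apply le_of_uup_le. intros d hd. apply le_of_uup_le.
      intros c hc. apply hu. exists d; auto. }
  destruct HB as [_ [hwb _]].
  destruct (proj1 (hwb x b) h T x hT hs (po_refl x)) as [c [[d [hd hc]] hcb]].
  exists d. split; auto. apply (wb_le_trans _ c); auto.
Qed.

Lemma not_le_approx_below x q : ~ le x q -> exists a, wb a x /\ ~ le a q.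
Proof.
  intros h. apply NNPP. intros hn. apply h, le_of_ddown_le. intros d hd.
  apply NNPP. intros hq. apply hn. exists d; auto.
Qed.

Lemma not_le_approx_above x q : ~ le q x -> exists c, wb x c /\ ~ le q c.
Proof.
  intros h. apply NNPP. intros hn. apply h, le_of_uup_le. intros d hd.
  apply NNPP. intros hq. apply hn. exists d; auto.
Qed.

Lemma bicontinuous_aux : interpolating_aux le wb.
Proof.
  split.
  - exact po_trans.
  - exact wb_le.
  - exact le_wb_trans.
  - exact wb_le_trans.
  - exact wb_interpolate.
  - exact not_le_approx_below.
  - intros a1 a2 x h1 h2. destruct (proj2 (ddown_directed x) a1 a2 h1 h2) as [a ha].
    exists a; exact ha.
  - intros c1 c2 x h1 h2. destruct (proj2 (uup_filtered x) c1 c2 h1 h2) as [c hc].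
    exists c; exact hc.
  - intros x. apply (ddown_directed x).
  - intros x. apply (uup_filtered x).
Qed.

Lemma bicontinuous_aux_dual :
  interpolating_aux (fun x y => le y x) (fun x y => wb y x).
Proof.
  split; intros *.
  - intros h1 h2. apply (po_trans _ y); auto.
  - apply wb_le.
  - intros h1 h2. apply (wb_le_trans _ b); auto.
  - intros h1 h2. apply (le_wb_trans _ b); auto.
  - intros h. destruct (wb_interpolate_above b a h) as [c [h1 h2]]. exists c; auto.
  - apply not_le_approx_above.
  - intros h1 h2. destruct (proj2 (uup_filtered x) a1 a2 h1 h2) as [a ha]. exists a; exact ha.
  - intros h1 h2. destruct (proj2 (ddown_directed x) c1 c2 h1 h2) as [c hc]. exists c; exact hc.
  - apply (uup_filtered x).
  - apply (ddown_directed x).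
Qed.

End Bicontinuous.

Lemma cont_dual {X : Type} (wb : X -> X -> Prop) f x :
  cont (fun x y => wb y x) f x -> cont wb f x.
Proof. intros h e he. destruct (h e he) as [a [c [ha [hc hP]]]]. exists c, a; auto. Qed.

Lemma interval_open_near {X : Type} (le : X -> X -> Prop) U :
  interval_open le U <-> forall x, U x -> near (way_below le) U x.
Proof.
  split; intros h x hx.
  - destruct (h x hx) as [a [b [[hax hxb] hsub]]].
    exists a, b. split; [auto | split; [auto |]]. intros z h1 h2. apply hsub. split; auto.
  - destruct (h x hx) as [a [b [hax [hxb hsub]]]].
    exists a, b. split; [split; auto |]. intros z [h1 h2]. apply hsub; auto.
Qed.

Lemma countable_pair_image {X Y : Type} (C : X -> Prop) (P : X -> X -> Prop) (F : X -> X -> Y) :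
  countable C -> countable (fun U => exists a b, C a /\ C b /\ P a b /\ U = F a b).
Proof.
  intros [g hg].
  assert (hcode : forall U, exists n, (exists a b, C a /\ C b /\ P a b /\ U = F a b) ->
    exists a b, C a /\ C b /\ U = F a b /\ n = Cantor.to_nat (g a, g b)).
  { intros U. destruct (classic (exists a b, C a /\ C b /\ P a b /\ U = F a b))
      as [[a [b [ha [hb [_ hU]]]]]|h]; [exists (Cantor.to_nat (g a, g b)) | exists 0%nat];
      [eauto 10 | tauto]. }
  exists (fun U => proj1_sig (constructive_indefinite_description _ (hcode U))).
  intros U V hU hV.
  destruct constructive_indefinite_description as [n hU'], constructive_indefinite_description as [n' hV'].
  cbn [proj1_sig]. intros <-.
  destruct (hU' hU) as [a [b [ha [hb [-> hn]]]]]. destruct (hV' hV) as [a' [b' [ha' [hb' [-> hn']]]]].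
  assert (hcodes : Cantor.to_nat (g a, g b) = Cantor.to_nat (g a', g b')) by congruence.
  apply (f_equal Cantor.of_nat) in hcodes. rewrite !Cantor.cancel_of_to in hcodes.
  injection hcodes as e1 e2. rewrite (hg a a'), (hg b b'); auto.
Qed.

Definition dense_intervals {X : Type} (le : X -> X -> Prop) (C : X -> Prop) : (X -> Prop) -> Prop :=
  fun U => exists a b, C a /\ C b /\ way_below le a b /\ U = interval_oo le a b.

Section DenseSubset.
Context {X : Type} (le : X -> X -> Prop) (C : X -> Prop).
Hypothesis HP : is_poset le.
Hypothesis HB : bicontinuous le.
Hypothesis Hd : interval_dense le C.
Local Notation wb := (way_below le).

Lemma dense_between a b : wb a b -> exists c, C c /\ wb a c /\ wb c b.
Proof.
  intros h. destruct (Hd (interval_oo le a b)) as [c [[h1 h2] h3]].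
  - intros x hx. exists a, b. split; auto. intros z hz; auto.
  - destruct (wb_interpolate le HP HB a b h) as [c hc]. exists c; exact hc.
  - exists c; auto.
Qed.

Lemma dense_below x : exists a, C a /\ wb a x.
Proof.
  destruct (ddown_directed le HP HB x) as [[a ha] _].
  destruct (dense_between a x ha) as [c [hc [_ hcx]]]. exists c; auto.
Qed.

Lemma dense_above x : exists b, C b /\ wb x b.
Proof.
  destruct (uup_filtered le HB x) as [[b hb] _].
  destruct (dense_between x b hb) as [c [hc [hxc _]]]. exists c; auto.
Qed.

Lemma ddown_dense_directed x : directed le (fun a => ddown le x a /\ C a).
Proof.
  split; [destruct (dense_below x) as [c [hc hcx]]; exists c; split; auto|].
  destruct (ddown_directed le HP HB x) as [_ hdir].
  - intros a1 a2 [h1 _] [h2 _]. destruct (hdir a1 a2 h1 h2) as [e [he [k1 k2]]].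
    destruct (dense_between e x he) as [c [hc [hec hcx]]]. exists c.
    split; [auto | split; apply (po_trans le HP _ e); auto; apply (wb_le le HP); auto].
Qed.

Lemma ddown_dense_sup x : is_sup le (fun a => ddown le x a /\ C a) x.
Proof.
  split; [intros a [h _]; apply (wb_le le HP); auto|].
  intros u hu. apply (le_of_ddown_le le HB). intros d hd.
  destruct (dense_between d x hd) as [c [hc [hdc hcx]]].
  apply (po_trans le HP _ c); [apply (wb_le le HP); auto | apply hu; split; auto].
Qed.

Lemma uup_dense_filtered x : filtered le (fun a => uup le x a /\ C a).
Proof.
  split; [destruct (dense_above x) as [c [hc hxc]]; exists c; split; auto|].
  destruct (uup_filtered le HB x) as [_ hfil].
  - intros a1 a2 [h1 _] [h2 _]. destruct (hfil a1 a2 h1 h2) as [e [he [k1 k2]]].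
    destruct (dense_between x e he) as [c [hc [hxc hce]]]. exists c.
    split; [auto | split; apply (po_trans le HP _ e); auto; apply (wb_le le HP); auto].
Qed.

Lemma uup_dense_inf x : is_inf le (fun a => uup le x a /\ C a) x.
Proof.
  split; [intros a [h _]; apply (wb_le le HP); auto|].
  intros u hu. apply (le_of_uup_le le HB). intros d hd.
  destruct (dense_between x d hd) as [c [hc [hxc hcd]]].
  apply (po_trans le HP _ c); [apply hu; split; auto | apply (wb_le le HP); auto].
Qed.

Lemma dense_intervals_basis : is_topological_basis le (dense_intervals le C).
Proof.
  split.
  - intros U [a [b [_ [_ [_ ->]]]]] x hx. exists a, b. split; auto. intros z hz; auto.
  - intros U hU x hx. destruct (hU x hx) as [a0 [c0 [[ha0 hc0] hsub]]].
    destruct (dense_between x c0 hc0) as [q [cq [hxq hqc]]].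
    destruct (dense_between a0 x ha0) as [p [cp [hap hpx]]].
    exists (interval_oo le p q). split; [|split; [split; auto|]].
    + exists p, q. do 3 (split; auto).
      apply (wb_le_trans le HP _ x); auto. apply (wb_le le HP); auto.
    + intros z [k1 k2]. apply hsub. split.
      * apply (le_wb_trans le HP _ p); auto. apply (wb_le le HP); auto.
      * apply (wb_le_trans le HP _ q); auto. apply (wb_le le HP); auto.
Qed.

End DenseSubset.

(** * A complete metric for the interval topology *)

Lemma eventually_Forall {A : Type} (P : A -> nat -> Prop) (l : list A) :
  (forall a, In a l -> exists N, forall n, (N <= n)%nat -> P a n) ->
  exists N, forall n, (N <= n)%nat -> forall a, In a l -> P a n.
Proof.
  induction l as [|a l IH]; intros h; [exists 0%nat; intros n _ a []|].
  destruct IH as [N1 h1]; [intros; apply h; right; auto|].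
  destruct (h a (or_introl eq_refl)) as [N2 h2].
  exists (max N1 N2). intros n hn b [<-|hb]; [apply h2 | apply h1]; auto; lia.
Qed.

Lemma compact_eventually_avoided {X : Type} (le : X -> X -> Prop) (K : X -> Prop) (u : nat -> X) :
  interval_compact le K ->
  (forall y, exists U, interval_open le U /\ U y /\
     exists N, forall n, (N <= n)%nat -> ~ U (u n)) ->
  exists N, forall n, (N <= n)%nat -> ~ K (u n).
Proof.
  intros hK hloc.
  destruct (hK (fun U => interval_open le U /\ exists N, forall n, (N <= n)%nat -> ~ U (u n)))
    as [l [hl hcov]].
  - intros U [hU _]; exact hU.
  - intros y _. destruct (hloc y) as [U [hU [hy hN]]]. exists U; auto.
  - destruct (eventually_Forall (fun U n => ~ U (u n)) l) as [N hN].
    + intros U hU. apply (hl U hU).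
    + exists N. intros n hn hKn. destruct (hcov (u n) hKn) as [U [hU hUn]].
      apply (hN n hn U hU hUn).
Qed.

Definition metric_cluster {X : Type} (d : X -> X -> R) (u : nat -> X) (y : X) : Prop :=
  forall eps, 0 < eps -> forall N, exists n, (N <= n)%nat /\ d (u n) y < eps.

Lemma cauchy_cluster_limit {X : Type} (d : X -> X -> R) (u : nat -> X) (y : X) :
  (forall x y z, d x z <= d x y + d y z) -> metric_cauchy d u -> metric_cluster d u y ->
  forall eps, 0 < eps -> exists N, forall n, (N <= n)%nat -> d (u n) y < eps.
Proof.
  intros htri hu hy e he. destruct (hu (e / 2)) as [N hN]; [lra|].
  exists N. intros n hn. destruct (hy (e / 2) ltac:(lra) N) as [m [hm hmy]].
  pose proof (hN n m hn hm). pose proof (htri (u n) (u m) y). lra.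
Qed.

Section Metric.
Context {X : Type} (le : X -> X -> Prop) (C : X -> Prop) (g : X -> nat) (x0 : X).
Hypothesis HP : is_poset le.
Hypothesis HB : bicontinuous le.
Hypothesis Hd : interval_dense le C.
Hypothesis Hg : forall x y, C x -> C y -> g x = g y -> x = y.
Local Notation wb := (way_below le).

Let Haux := bicontinuous_aux le HP HB.
Let Haux_dual := bicontinuous_aux_dual le HP HB.

(* [ury_down p q] is [0] on the down-set of [p] and [1] off that of [q];
   [ury_up] is its order dual. *)
Definition ury_down (p q : X) : X -> R := ury le wb p q.
Definition ury_up (p q : X) : X -> R := ury (fun x y => le y x) (fun x y => wb y x) p q.

Lemma ury_up_cont p q x : wb q p -> cont wb (ury_up p q) x.
Proof. intros h. apply cont_dual, (ury_cont _ _ Haux_dual); auto. Qed.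

Definition enumC (m : nat) : X := epsilon (inhabits x0) (fun c => C c /\ g c = m).

Lemma enumC_g c : C c -> enumC (g c) = c.
Proof.
  intros hc. unfold enumC.
  destruct (epsilon_spec (inhabits x0) (fun c' => C c' /\ g c' = g c)) as [h1 h2]; eauto.
Qed.

Definition cpair (m : nat) : X * X :=
  (enumC (fst (Cantor.of_nat m)), enumC (snd (Cantor.of_nat m))).

Lemma cpair_surj p q : C p -> C q -> exists m, cpair m = (p, q).
Proof.
  intros hp hq. exists (Cantor.to_nat (g p, g q)). unfold cpair.
  rewrite Cantor.cancel_of_to. cbn [fst snd]. rewrite !enumC_g; auto.
Qed.

Definition hdown (m : nat) (x : X) : R :=
  let (p, q) := cpair m in
  if excluded_middle_informative (wb p q) then ury_down p q x else 0.

Definition hup (m : nat) (x : X) : R :=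
  let (p, q) := cpair m in
  if excluded_middle_informative (wb q p) then ury_up p q x else 0.

Lemma hdown_01 m x : 0 <= hdown m x <= 1.
Proof.
  unfold hdown. destruct (cpair m), excluded_middle_informative; [apply ury_01 | lra].
Qed.

Lemma hup_01 m x : 0 <= hup m x <= 1.
Proof.
  unfold hup. destruct (cpair m), excluded_middle_informative; [apply ury_01 | lra].
Qed.

Lemma hdown_cont m x : cont wb (hdown m) x.
Proof.
  unfold hdown. destruct (cpair m), excluded_middle_informative.
  - apply (ury_cont _ _ Haux); auto.
  - apply (cont_const _ _ Haux).
Qed.

Lemma hup_cont m x : cont wb (hup m) x.
Proof.
  unfold hup. destruct (cpair m), excluded_middle_informative.
  - apply ury_up_cont; auto.
  - apply (cont_const _ _ Haux).
Qed.

Lemma hdown_eq m p q x : cpair m = (p, q) -> wb p q -> hdown m x = ury_down p q x.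
Proof. intros hm h. unfold hdown. rewrite hm. destruct excluded_middle_informative; tauto. Qed.

Lemma hup_eq m p q x : cpair m = (p, q) -> wb q p -> hup m x = ury_up p q x.
Proof. intros hm h. unfold hup. rewrite hm. destruct excluded_middle_informative; tauto. Qed.

Definition term (x y : X) (m : nat) : R :=
  / 2 ^ m * (Rabs (hdown m y - hdown m x) + Rabs (hup m y - hup m x)).

Definition d0 (x y : X) : R := ssum (term x y).

Lemma term_bound x y m : 0 <= term x y m <= 2 / 2 ^ m.
Proof.
  unfold term. pose proof (Rinv_0_lt_compat _ (pow2_pos m)).
  pose proof (hdown_01 m x). pose proof (hdown_01 m y).
  pose proof (hup_01 m x). pose proof (hup_01 m y).
  assert (Rabs (hdown m y - hdown m x) <= 1) by (apply Rabs_le; lra).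
  assert (Rabs (hup m y - hup m x) <= 1) by (apply Rabs_le; lra).
  pose proof (Rabs_pos (hdown m y - hdown m x)). pose proof (Rabs_pos (hup m y - hup m x)).
  unfold Rdiv. split; [apply Rmult_le_pos; lra|].
  rewrite Rmult_comm. apply Rmult_le_compat_r; lra.
Qed.

Lemma term_diag x m : term x x m = 0.
Proof. unfold term. rewrite !Rminus_diag, Rabs_R0. ring. Qed.

Lemma d0_ge0 x y : 0 <= d0 x y.
Proof. apply ssum_ge0, term_bound. Qed.

Lemma term_le_d0 x y m : term x y m <= d0 x y.
Proof. apply term_le_ssum, term_bound. Qed.

Lemma d0_refl x : d0 x x = 0.
Proof.
  unfold d0. rewrite (ssum_finite _ 0); [reflexivity | apply term_bound | intros m _; apply term_diag].
Qed.

Lemma d0_sym x y : d0 x y = d0 y x.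
Proof.
  unfold d0. f_equal. extensionality m. unfold term.
  rewrite (Rabs_minus_sym (hdown m y)), (Rabs_minus_sym (hup m y)). reflexivity.
Qed.

Lemma d0_triangle x y z : d0 x z <= d0 x y + d0 y z.
Proof.
  apply ssum_le_add; try apply term_bound. intros m. unfold term.
  rewrite <- Rmult_plus_distr_l. apply Rmult_le_compat_l; [left; apply Rinv_0_lt_compat, pow2_pos|].
  pose proof (Rabs_triang (hdown m y - hdown m x) (hdown m z - hdown m y)).
  pose proof (Rabs_triang (hup m y - hup m x) (hup m z - hup m y)).
  replace (hdown m y - hdown m x + (hdown m z - hdown m y)) with (hdown m z - hdown m x) in * by ring.
  replace (hup m y - hup m x + (hup m z - hup m y)) with (hup m z - hup m x) in * by ring.
  lra.
Qed.

Lemma d0_eq0 x y : d0 x y = 0 -> forall m, hdown m x = hdown m y.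
Proof.
  intros h m. pose proof (term_le_d0 x y m). pose proof (term_bound x y m).
  assert (ht : term x y m = 0) by lra. unfold term in ht.
  apply Rmult_integral in ht as [ht|ht]; [pose proof (Rinv_neq_0_compat _ (Rgt_not_eq _ _ (pow2_pos m))); contradiction|].
  pose proof (Rabs_pos (hdown m y - hdown m x)). pose proof (Rabs_pos (hup m y - hup m x)).
  assert (h0 : Rabs (hdown m y - hdown m x) = 0) by lra.
  destruct (Req_dec (hdown m y - hdown m x) 0) as [h1|h1]; [lra | now apply Rabs_no_R0 in h1].
Qed.

(* [d0] is continuous at [x] since it is a uniform limit of finite sums of continuous functions. *)
Lemma d0_small_near x e : 0 < e -> near wb (fun z => d0 x z < e) x.
Proof.
  intros he. destruct (dyadic_small (e / 8)) as [N hN]; [lra|].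
  assert (hpsum : cont wb (fun z => psum (term x z) N) x).
  { apply (cont_psum _ _ Haux). intros m. apply cont_scal, (cont_plus _ _ Haux);
      apply cont_dist; [apply hdown_cont | apply hup_cont]. }
  eapply near_mono; [|apply (hpsum (e / 2)); lra].
  intros z hz. pose proof (ssum_le_psum (term x z) (term_bound x z) N).
  replace (psum (term x x) N) with 0 in hz.
  - pose proof (psum_mono (term x z) 0 N (fun m => proj1 (term_bound x z m)) (Nat.le_0_l N)).
    simpl in *. rewrite Rminus_0_r, Rabs_pos_eq in hz by lra.
    unfold d0. replace (4 / 2 ^ N) with (4 * / 2 ^ N) in * by reflexivity. lra.
  - rewrite (psum_stationary _ 0 N); auto using term_diag; lia.
Qed.

Definition cquad (j : nat) : (X * X) * (X * X) :=
  (cpair (fst (Cantor.of_nat j)), cpair (snd (Cantor.of_nat j))).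

Lemma cquad_surj a a' b' b : C a -> C a' -> C b' -> C b ->
  exists j, cquad j = ((a, a'), (b', b)).
Proof.
  intros ha ha' hb' hb.
  destruct (cpair_surj a a' ha ha') as [m1 h1], (cpair_surj b' b hb' hb) as [m2 h2].
  exists (Cantor.to_nat (m1, m2)). unfold cquad. rewrite Cantor.cancel_of_to. cbn [fst snd].
  rewrite h1, h2. reflexivity.
Qed.

(* The quadruples [a << a'], [b' << b] from [C] index boxes [[a, b]]; [chi j] is [1]
   off the box and vanishes on the inner box [[a', b']]. *)
Definition in_box (j : nat) (z : X) : Prop :=
  let '((a, a'), (b', b)) := cquad j in wb a a' /\ wb b' b /\ le a z /\ le z b.

Definition chi (j : nat) (x : X) : R :=
  let '((a, a'), (b', b)) := cquad j in
  if excluded_middle_informative (wb a a' /\ wb b' b)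
  then Rmax (ury_down b' b x) (ury_up a' a x) else 1.

Lemma chi_01 j x : 0 <= chi j x <= 1.
Proof.
  unfold chi. destruct (cquad j) as [[a a'] [b' b]], excluded_middle_informative; [|lra].
  pose proof (ury_01 le wb b' b x). pose proof (ury_01 (fun x y => le y x) (fun x y => wb y x) a' a x).
  unfold ury_down, ury_up, Rmax. destruct Rle_dec; lra.
Qed.

Lemma chi_cont j x : cont wb (chi j) x.
Proof.
  unfold chi. destruct (cquad j) as [[a a'] [b' b]], excluded_middle_informative as [[h1 h2]|h].
  - apply (cont_max _ _ Haux); [apply (ury_cont _ _ Haux) | apply ury_up_cont]; auto.
  - apply (cont_const _ _ Haux).
Qed.

Lemma chi_outside j z : ~ in_box j z -> chi j z = 1.
Proof.
  unfold in_box, chi. destruct (cquad j) as [[a a'] [b' b]].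
  intros hz. destruct excluded_middle_informative as [[h1 h2]|]; auto.
  pose proof (ury_01 le wb b' b z). pose proof (ury_01 (fun x y => le y x) (fun x y => wb y x) a' a z).
  destruct (classic (le a z)) as [haz|haz].
  - assert (hzb : ~ le z b) by tauto. unfold ury_down. rewrite (ury_outside _ _ b' b z hzb).
    unfold Rmax. destruct Rle_dec; unfold ury_up in *; lra.
  - assert (hup : ury_up a' a z = 1) by (apply ury_outside; auto). rewrite hup.
    unfold Rmax. destruct Rle_dec; unfold ury_down in *; lra.
Qed.

Lemma chi_vanishes_near x : exists j, near wb (fun z => chi j z = 0) x.
Proof.
  destruct (dense_below le C HP HB Hd x) as [a' [ha' ha'x]].
  destruct (dense_below le C HP HB Hd a') as [a [ha haa']].
  destruct (dense_above le C HP HB Hd x) as [b' [hb' hxb']].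
  destruct (dense_above le C HP HB Hd b') as [b [hb hb'b]].
  destruct (cquad_surj a a' b' b) as [j hj]; auto.
  exists j, a', b'. split; [auto | split; [auto|]]. intros z hz1 hz2.
  unfold chi. rewrite hj. destruct excluded_middle_informative as [_|hn]; [|tauto].
  assert (hzb' : le z b') by (apply (wb_le le HP); auto).
  assert (ha'z : le a' z) by (apply (wb_le le HP); auto).
  unfold ury_down, ury_up. rewrite (ury_below _ _ Haux b' b z), (ury_below _ _ Haux_dual a' a z); auto.
  unfold Rmax. destruct Rle_dec; auto.
Qed.

Fixpoint chi_prod (n : nat) (x : X) : R :=
  match n with O => chi 0 x | S n => chi_prod n x * chi (S n) x end.

Lemma chi_prod_01 n x : 0 <= chi_prod n x <= 1.
Proof.
  induction n as [|n IH]; simpl; [apply chi_01|]. pose proof (chi_01 (S n) x).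
  split; [apply Rmult_le_pos; lra|]. rewrite <- (Rmult_1_l 1). apply Rmult_le_compat; lra.
Qed.

Lemma chi_prod_cont n x : cont wb (chi_prod n) x.
Proof.
  induction n as [|n IH]; simpl; [apply chi_cont|].
  apply (cont_mult01 _ _ Haux); auto using chi_prod_01, chi_01, chi_cont.
Qed.

Lemma chi_prod_zero j n z : chi j z = 0 -> (j <= n)%nat -> chi_prod n z = 0.
Proof.
  intros hj hn. induction hn as [|n hn IH]; simpl; [|rewrite IH; ring].
  destruct j; simpl; auto. rewrite hj; ring.
Qed.

(* A continuous function with [phi z >= M + 1] outside the first [M + 1] boxes; since
   the boxes are compact in the globally hyperbolic case, [phi] is then proper. *)
Definition phi (x : X) : R := ssum (fun n => chi_prod n x).

Lemma phi_local j z : chi j z = 0 -> phi z = psum (fun n => chi_prod n z) j.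
Proof.
  intros hj. apply ssum_finite; [intros; apply chi_prod_01 | intros m hm].
  apply (chi_prod_zero j); auto.
Qed.

Lemma phi_cont x : cont wb phi x.
Proof.
  destruct (chi_vanishes_near x) as [j hj].
  apply (cont_local _ _ Haux (fun z => psum (fun n => chi_prod n z) j)).
  - eapply near_mono; [|exact hj]. intros z hz. symmetry. apply phi_local; auto.
  - apply (cont_psum _ _ Haux). intros; apply chi_prod_cont.
Qed.

Lemma psum_le_phi N z : psum (fun n => chi_prod n z) N <= phi z.
Proof.
  destruct (chi_vanishes_near z) as [j hj]. pose proof (near_at _ _ _ hj) as hz.
  rewrite (phi_local j z hz). destruct (Nat.le_ge_cases N j).
  - apply psum_mono; auto. intros; apply chi_prod_01.
  - rewrite (psum_stationary _ j N); [lra | | auto]. intros m hm. apply (chi_prod_zero j); auto.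
Qed.

Lemma phi_ge0 x : 0 <= phi x.
Proof. apply (psum_le_phi 0). Qed.

Lemma phi_lt_in_box M z : phi z < INR (S M) -> exists k, (k <= M)%nat /\ in_box k z.
Proof.
  intros hphi. apply NNPP. intros hnone.
  assert (hone : forall n, (n <= M)%nat -> chi_prod n z = 1).
  { assert (hchi : forall k, (k <= M)%nat -> chi k z = 1).
    { intros k hk. apply chi_outside. intros hbox. apply hnone. eauto. }
    intros n hn. induction n as [|n IH]; simpl; [apply hchi; lia|]. rewrite IH, hchi by lia. ring. }
  assert (hsum : forall n, (n <= S M)%nat -> psum (fun n => chi_prod n z) n = INR n).
  { intros n hn. induction n as [|n IH]; auto. cbn [psum]. rewrite IH, hone by lia.
    rewrite S_INR. reflexivity. }
  pose proof (psum_le_phi (S M) z). rewrite hsum in *; auto. lra.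
Qed.

Definition dist (x y : X) : R := d0 x y + Rabs (phi x - phi y).

Lemma hdown_separates x y : ~ le x y -> exists m, hdown m x <> hdown m y.
Proof.
  intros h. destruct (not_le_approx_above le HB y x h) as [c [hyc hxc]].
  destruct (dense_between le C HP HB Hd y c hyc) as [q [hq [hyq hqc]]].
  destruct (dense_between le C HP HB Hd y q hyq) as [p [hp [hyp hpq]]].
  destruct (cpair_surj p q hp hq) as [m hm]. exists m.
  rewrite !(hdown_eq m p q) by auto. unfold ury_down.
  assert (hxq : ~ le x q).
  { intros hxq. apply hxc, (po_trans le HP _ q); auto. apply (wb_le le HP); auto. }
  assert (hyp' : le y p) by (apply (wb_le le HP); auto).
  rewrite (ury_below _ _ Haux p q y), (ury_outside _ _ p q x hxq); auto.
Qed.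

Lemma dist_metric : is_metric dist.
Proof.
  unfold dist. pose proof d0_ge0. split; [|split; [|split]].
  - intros x y. pose proof (Rabs_pos (phi x - phi y)). specialize (H x y). lra.
  - intros x y. split.
    + intros h. pose proof (Rabs_pos (phi x - phi y)). pose proof (H x y).
      assert (hd : forall m, hdown m x = hdown m y) by (apply d0_eq0; lra).
      apply HP; apply NNPP; intros hn; destruct (hdown_separates _ _ hn) as [m hm];
        apply hm; auto.
    + intros ->. rewrite d0_refl, Rminus_diag, Rabs_R0. lra.
  - intros x y. rewrite d0_sym, Rabs_minus_sym. reflexivity.
  - intros x y z. pose proof (d0_triangle x y z).
    pose proof (Rabs_triang (phi x - phi y) (phi y - phi z)).
    replace (phi x - phi y + (phi y - phi z)) with (phi x - phi z) in * by ring. lra.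
Qed.

Lemma dist_refl x : dist x x = 0.
Proof. unfold dist. rewrite d0_refl, Rminus_diag, Rabs_R0. ring. Qed.

Lemma dist_sym x y : dist x y = dist y x.
Proof. apply dist_metric. Qed.

Lemma dist_triangle x y z : dist x z <= dist x y + dist y z.
Proof. apply dist_metric. Qed.

Lemma dist_small_near x e : 0 < e -> near wb (fun z => dist x z < e) x.
Proof.
  intros he. eapply near_mono;
    [|apply (near_and _ _ Haux); [apply (d0_small_near x (e / 2)) | apply (phi_cont x (e / 2))]];
    try lra.
  intros z [h1 h2]. unfold dist. rewrite Rabs_minus_sym. lra.
Qed.

Lemma close_of_d0_lt_inv_pow2 x z m : d0 x z < / 2 ^ m ->
  Rabs (hdown m z - hdown m x) < 1 /\ Rabs (hup m z - hup m x) < 1.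
Proof.
  intros h. pose proof (term_le_d0 x z m) as ht. unfold term in ht.
  pose proof (Rinv_0_lt_compat _ (pow2_pos m)).
  pose proof (Rabs_pos (hdown m z - hdown m x)). pose proof (Rabs_pos (hup m z - hup m x)).
  split; apply (Rmult_lt_reg_l (/ 2 ^ m)); auto; nra.
Qed.

Lemma d0_small_below x c : wb x c -> exists e, 0 < e /\ forall z, d0 x z < e -> wb z c.
Proof.
  intros hxc. destruct (dense_between le C HP HB Hd x c hxc) as [q [hq [hxq hqc]]].
  destruct (dense_between le C HP HB Hd x q hxq) as [p [hp [hxp hpq]]].
  destruct (cpair_surj p q hp hq) as [m hm].
  exists (/ 2 ^ m). split; [apply Rinv_0_lt_compat, pow2_pos|]. intros z hz.
  destruct (close_of_d0_lt_inv_pow2 x z m hz) as [hlt _].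
  rewrite !(hdown_eq m p q) in hlt by auto. unfold ury_down in hlt.
  rewrite (ury_below _ _ Haux p q x) in hlt by (auto; apply (wb_le le HP); auto).
  assert (hzq : le z q).
  { apply NNPP. intros hn. rewrite (ury_outside _ _ p q z hn) in hlt.
    rewrite Rminus_0_r, Rabs_R1 in hlt. lra. }
  apply (le_wb_trans le HP _ q); auto.
Qed.

Lemma d0_small_above a x : wb a x -> exists e, 0 < e /\ forall z, d0 x z < e -> wb a z.
Proof.
  intros hax. destruct (dense_between le C HP HB Hd a x hax) as [q [hq [haq hqx]]].
  destruct (dense_between le C HP HB Hd q x hqx) as [p [hp [hqp hpx]]].
  destruct (cpair_surj p q hp hq) as [m hm].
  exists (/ 2 ^ m). split; [apply Rinv_0_lt_compat, pow2_pos|]. intros z hz.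
  destruct (close_of_d0_lt_inv_pow2 x z m hz) as [_ hlt].
  rewrite !(hup_eq m p q) in hlt by auto. unfold ury_up in hlt.
  rewrite (ury_below _ _ Haux_dual p q x) in hlt by (auto; apply (wb_le le HP); auto).
  assert (hqz : le q z).
  { apply NNPP. intros hn. rewrite (ury_outside _ _ p q z hn) in hlt.
    rewrite Rminus_0_r, Rabs_R1 in hlt. lra. }
  apply (wb_le_trans le HP _ q); auto.
Qed.

Lemma dist_topology U : interval_open le U <-> metric_open dist U.
Proof.
  rewrite interval_open_near. split; intros hU x hx.
  - destruct (hU x hx) as [a [c [hax [hxc hsub]]]].
    destruct (d0_small_above a x hax) as [e1 [he1 h1]], (d0_small_below x c hxc) as [e2 [he2 h2]].
    exists (Rmin e1 e2). split; [apply Rmin_pos; auto|]. intros z hz.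
    assert (d0 x z < Rmin e1 e2) by (unfold dist in hz; pose proof (Rabs_pos (phi x - phi z)); lra).
    apply hsub; [apply h1 | apply h2]; pose proof (Rmin_l e1 e2); pose proof (Rmin_r e1 e2); lra.
  - destruct (hU x hx) as [e [he hball]].
    eapply near_mono; [|apply (dist_small_near x e he)]. exact hball.
Qed.

Lemma dist_ball_open y e : interval_open le (fun z => dist y z < e).
Proof.
  apply dist_topology. intros x hx. exists (e - dist y x). split; [lra|].
  intros z hz. pose proof (dist_triangle y x z). lra.
Qed.

Lemma cauchy_phi_bounded u : metric_cauchy dist u ->
  exists N M, forall n, (N <= n)%nat -> phi (u n) < INR (S M).
Proof.
  intros hu. destruct (hu 1) as [N hN]; [lra|].
  destruct (dyadic_floor (phi (u N) + 1) 0) as [M [_ hM]]; [pose proof (phi_ge0 (u N)); lra|].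
  exists N, M. intros n hn. specialize (hN n N hn (le_n N)). unfold dist in hN.
  pose proof (d0_ge0 (u n) (u N)). pose proof (Rle_abs (phi (u n) - phi (u N))).
  simpl pow in hM. rewrite Rdiv_1_r in hM. lra.
Qed.

Lemma no_cluster_compact_avoided u K : interval_compact le K -> ~ (exists y, metric_cluster dist u y) ->
  exists N, forall n, (N <= n)%nat -> ~ K (u n).
Proof.
  intros hK hno. apply (compact_eventually_avoided le K u hK). intros y.
  assert (hy : ~ metric_cluster dist u y) by eauto.
  unfold metric_cluster in hy.
  apply not_all_ex_not in hy as [e hy]. apply imply_to_and in hy as [he hy].
  apply not_all_ex_not in hy as [N hy].
  exists (fun z => dist y z < e). split; [apply dist_ball_open | split].
  - rewrite dist_refl. auto.
  - exists N. intros n hn hlt. apply hy. exists n. rewrite dist_sym. auto.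
Qed.

(* A Cauchy sequence eventually stays in finitely many compact boxes (as [phi] is bounded
   on it), so it has a cluster point, which is then its limit. *)
Lemma dist_complete : (forall a b, interval_compact le (interval_cc le a b)) -> metric_complete dist.
Proof.
  intros hK u hu. destruct (cauchy_phi_bounded u hu) as [N [M hM]].
  assert (hcl : exists y, metric_cluster dist u y).
  { apply NNPP. intros hno.
    destruct (eventually_Forall (fun k n => ~ in_box k (u n)) (seq 0 (S M))) as [N' hN'].
    - intros k _. unfold in_box. destruct (cquad k) as [[a a'] [b' b]].
      destruct (no_cluster_compact_avoided u _ (hK a b) hno) as [Nk hNk].
      exists Nk. intros n hn hbox. apply (hNk n hn). split; apply hbox.
    - destruct (phi_lt_in_box M (u (max N N'))) as [k [hk hbox]]; [apply hM; lia|].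
      apply (hN' (max N N') ltac:(lia) k); auto. apply in_seq. lia. }
  destruct hcl as [y hy]. exists y. apply cauchy_cluster_limit; auto using dist_triangle.
Qed.

Lemma completely_metrizable_of_compact_intervals :
  (forall a b, interval_compact le (interval_cc le a b)) -> interval_completely_metrizable le.
Proof.
  intros hK. exists dist. split; [apply dist_metric | split; [apply dist_topology | apply dist_complete; auto]].
Qed.

End Metric.

Lemma completely_metrizable_empty {X : Type} (le : X -> X -> Prop) :
  ~ inhabited X -> interval_completely_metrizable le.
Proof.
  intros hX. assert (hnone : forall x : X, False) by (intros x; apply hX; constructor; exact x).
  exists (fun _ _ => 0). split; [|split].
  - split; [|split; [|split]]; intros x; destruct (hnone x).
  - intros U; split; intros _ x; destruct (hnone x).
  - intros u _. destruct (hnone (u 0%nat)).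
Qed.

Theorem mainTheorem2 (X : Type) (le : X -> X -> Prop) (C : X -> Prop) :
  is_poset le -> bicontinuous le ->
  countable C -> interval_dense le C ->
  (* (i) the intervals (a,b), a,b in C, a << b, form a countable basis *)
  (let B := fun U : X -> Prop =>
       exists a b, C a /\ C b /\ way_below le a b /\ U = interval_oo le a b in
   countable B /\ is_topological_basis le B) /\
  second_countable le /\
  (globally_hyperbolic le -> interval_completely_metrizable le) /\
  (* (ii) *)
  (forall x,
     (exists S, subset S (fun a => ddown le x a /\ C a) /\
                directed le S /\ is_sup le S x) /\
     (exists S, subset S (fun a => uup le x a /\ C a) /\
                filtered le S /\ is_inf le S x)).
Proof.
  intros HP HB hC Hd.
  assert (hbasis : countable (dense_intervals le C) /\ is_topological_basis le (dense_intervals le C)).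
  { split; [apply countable_pair_image, hC | apply dense_intervals_basis; auto]. }
  split; [exact hbasis | split; [exists (dense_intervals le C); exact hbasis | split]].
  - intros [_ hK]. destruct (classic (inhabited X)) as [[x0]|hX].
    + destruct hC as [g hg].
      apply (completely_metrizable_of_compact_intervals le C g x0); auto.
    + apply completely_metrizable_empty; auto.
  - intros x. split.
    + exists (fun a => ddown le x a /\ C a). split; [intros a ha; exact ha|].
      split; [apply ddown_dense_directed | apply ddown_dense_sup]; auto.
    + exists (fun a => uup le x a /\ C a). split; [intros a ha; exact ha|].
      split; [apply uup_dense_filtered | apply uup_dense_inf]; auto.
Qed.
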